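(* Let $n,k,r$ be integers with $k,r\geq 2$, $k<r$ and $n\geq k+r$, and let $H$ be a vertex-$k$-maximal $r$-uniform hypergraph on $n$ vertices. Let $S$ be a minimum vertex-cut of $H$, $C_1$ a component of $H-S$, $C_2=H-(V(C_1)\cup S)$, $H_1=H[V(C_1)\cup S]$ and $H_2=H[V(C_2)\cup S]$. Then both $H_1$ and $H_2$ are vertex-$k$-maximal $r$-uniform hypergraphs.
   Context: A hypergraph $H=(V,E)$ consists of a finite vertex set $V$ and a set $E$ of non-empty subsets of $V$ (edges); it is $r$-uniform if all edges have exactly $r$ elements. The complement $H^c$ has as edges the $r$-subsets of $V$ not in $E$. A subhypergraph is $H'=(V',E')$ with $V'\subseteq V$, $E'\subseteq E$. $H+e=(V,E\cup\{e\})$ for $e\in E(H^c)$. For $Y\subseteq V$, $H[Y]$ is the induced hypergraph with vertex set $Y$ and edges $\{e\in E: e\subseteq Y\}$, and $H-Y=H[V\setminus Y]$. Connectedness and components are defined via paths (alternating sequences of distinct vertices and distinct edges with consecutive vertices in the intermediate edge). A vertex-cut is a set $X$ with $H-X$ disconnected. $\kappa(H)$ is the minimum size of a vertex-cut if one exists, and $|V(H)|-1$ otherwise. $\overline{\kappa}(H)=\max\{\kappa(H'): H'\subseteq H\}$. An $r$-uniform hypergraph $H$ is vertex-$k$-maximal if $\overline{\kappa}(H)\leq k$ but $\overline{\kappa}(H+e)\geq k+1$ for every $e\in E(H^c)$. *)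

From mathcomp Require Import all_boot.
Set Implicit Arguments. Unset Strict Implicit. Unset Printing Implicit Defensive.

Record hypergraph (T : finType) := Hypergraph {
  hV : {set T};
  hE : {set {set T}} }.

Section Hyper.
Variable T : finType.
Implicit Types (H : hypergraph T) (X Y : {set T}).

Definition wf H := forall e, e \in hE H -> e \subset hV H /\ e != set0.

Definition uniform (r : nat) H := forall e, e \in hE H -> #|e| = r.

Definition compl_edge (r : nat) H (e : {set T}) :=
  [/\ e \subset hV H, #|e| = r & e \notin hE H].

Definition subhg (H' H : hypergraph T) :=
  [/\ hV H' \subset hV H, hE H' \subset hE H & wf H'].

Definition add_edge H (e : {set T}) := Hypergraph (hV H) (e |: hE H).

Definition induced H Y := Hypergraph Y [set e in hE H | e \subset Y].

Definition hdel H X := induced H (hV H :\: X).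

Definition adj H : rel T := fun x y => [exists e in hE H, (x \in e) && (y \in e)].

Definition connected H := forall x y, x \in hV H -> y \in hV H -> connect (adj H) x y.

Definition comp_of H (x : T) := [set y in hV H | connect (adj H) x y].

Definition vcut H X := X \subset hV H /\ ~ connected (hdel H X).

Definition vcutb H X := (X \subset hV H) && ~~ [forall x in hV (hdel H X),
  forall y in hV (hdel H X), connect (adj (hdel H X)) x y].

Definition kappa H : nat :=
  if [exists X, vcutb H X] then \big[minn/#|hV H|]_(X | vcutb H X) #|X|
  else #|hV H|.-1.

Definition subhgb (H' H : hypergraph T) :=
  [&& hV H' \subset hV H, hE H' \subset hE H &
      [forall e in hE H', (e \subset hV H') && (e != set0)]].

Definition kappa_bar H : nat :=
  \max_(p : {set T} * {set {set T}} | subhgb (Hypergraph p.1 p.2) H)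
     kappa (Hypergraph p.1 p.2).

Definition min_vcut H S := vcut H S /\ forall X, vcut H X -> #|S| <= #|X|.

Definition vertex_k_maximal (k r : nat) H :=
  [/\ wf H, uniform r H, kappa_bar H <= k &
      forall e, compl_edge r H e -> k.+1 <= kappa_bar (add_edge H e)].

End Hyper.

(* If S is a vertex cut with |S| <= k and A is a union of components of H - S, a
   non-edge e of H[A u S] is a non-edge of H, so H + e contains a subhypergraph H'
   with kappa(H') > k; H' must use e, hence a vertex of e outside S, which lies in A.
   If H' had a vertex outside A u S, then the part of S in H' would separate it from
   that vertex (edges of H' avoiding S stay inside A or outside it, e included), a cut
   of size at most |S| <= k.  So H' lives in H[A u S] + e, and H[A u S] is
   vertex-k-maximal as well; both H_1 and H_2 are of this form. *)
From mathcomp Require Import all_boot.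
Set Implicit Arguments. Unset Strict Implicit. Unset Printing Implicit Defensive.

Section VertexMaximal.
Variable T : finType.
Implicit Types (H G : hypergraph T) (S A X Y e : {set T}).

Lemma geq_bigminn_cond (I : eqType) (s : seq I) (P : pred I) (F : I -> nat) x0 i :
  i \in s -> P i -> \big[minn/x0]_(j <- s | P j) F j <= F i.
Proof.
elim: s => //= j s IHs; rewrite in_cons big_cons => /orP[/eqP<- -> | si Pi].
  exact: geq_minl.
by case: ifP => _; [apply: leq_trans (geq_minr _ _) _|]; apply: IHs.
Qed.

Lemma vcutP G X : reflect (vcut G X) (vcutb G X).
Proof.
apply: (iffP andP) => [[XV nc] | [XV nc]]; split=> //.
  move=> c; case/negP: nc; apply/forallP=> y; apply/implyP=> yV.
  by apply/forallP=> z; apply/implyP=> zV; apply: c.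
apply/negP=> /forallP c; apply: nc => y z yV zV.
by move/implyP: (c y) => /(_ yV) /forallP /(_ z) /implyP; apply.
Qed.

Lemma kappa_le_vcut G X : vcut G X -> kappa G <= #|X|.
Proof.
move/vcutP=> cutX; rewrite /kappa.
have ->: [exists X, vcutb G X] by apply/existsP; exists X.
by apply: geq_bigminn_cond; rewrite ?mem_index_enum.
Qed.

Lemma min_vcut_le_kappa H S : min_vcut H S -> #|S| <= kappa H.
Proof.
move=> [cutS minS]; rewrite /kappa.
have ->: [exists X, vcutb H X] by apply/existsP; exists S; apply/vcutP.
apply: (big_ind (fun m => #|S| <= m)) => [|m1 m2|X /vcutP].
- by case: cutS => SV _; apply: subset_leq_card.
- by rewrite leq_min => -> ->.
- exact: minS.
Qed.

Lemma subhgbW G1 G2 G3 : subhgb G1 G2 ->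
  hV G1 \subset hV G3 -> hE G1 \subset hE G3 -> subhgb G1 G3.
Proof. by case/and3P=> _ _ wf1 V13 E13; apply/and3P. Qed.

Lemma kappa_le_kappa_bar_sub G H : subhgb G H -> kappa G <= kappa_bar H.
Proof.
case: G => V E subG.
exact: (@leq_bigmax_cond _ (fun p => subhgb (Hypergraph p.1 p.2) H)
          (fun p => kappa (Hypergraph p.1 p.2)) (V, E)).
Qed.

Lemma kappa_le_kappa_bar H : wf H -> kappa H <= kappa_bar H.
Proof.
move=> wfH; apply: kappa_le_kappa_bar_sub; apply/and3P; split=> //.
by apply/forallP=> e; apply/implyP=> /wfH[-> ->].
Qed.

Lemma kappa_bar_le_sub G H :
  hV G \subset hV H -> hE G \subset hE H -> kappa_bar G <= kappa_bar H.
Proof.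
move=> VGH EGH; apply/bigmax_leqP => p subp; apply: kappa_le_kappa_bar_sub.
case/and3P: (subp) => /= VpG EpG _.
by apply: subhgbW subp _ _; [apply: subset_trans VGH | apply: subset_trans EGH].
Qed.

Lemma kappa_bar_gt_witness m H : m < kappa_bar H ->
  exists2 G, subhgb G H & m < kappa G.
Proof.
move=> lt_m; case: (pickP [pred p : {set T} * {set {set T}} |
    subhgb (Hypergraph p.1 p.2) H && (m < kappa (Hypergraph p.1 p.2))]).
  by move=> p /andP[subp lt_mp]; exists (Hypergraph p.1 p.2).
move=> none; move: lt_m; rewrite ltnNge => /negP[].
apply/bigmax_leqP => p subp; rewrite leqNgt; apply/negP => lt_mp.
by move: (none p); rewrite /= subp lt_mp.
Qed.

(* A is a union of vertex sets of components of H - S. *)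
Definition comp_union H S A :=
  A \subset hV H :\: S /\
  forall f, f \in hE H -> [disjoint f & S] ->
    forall y z, y \in f -> z \in f -> y \in A -> z \in A.

Lemma comp_union_comp_of H S x : wf H -> comp_union H S (comp_of (hdel H S) x).
Proof.
move=> wfH; split; first by apply/subsetP=> y; rewrite inE => /andP[].
move=> f fH fS y z yf zf; rewrite !inE => /andP[yVS xy].
have fVS : f \subset hV H :\: S.
  apply/subsetP=> w wf; rewrite inE (disjointFr fS wf).
  by case: (wfH f fH) => /subsetP/(_ w wf).
rewrite -in_setD (subsetP fVS z zf); apply: connect_trans xy (connect1 _).
by apply/existsP; exists f; rewrite inE fH fVS yf zf.
Qed.

Lemma comp_union_compl H S A :
  wf H -> comp_union H S A -> comp_union H S (hV H :\: (A :|: S)).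
Proof.
move=> wfH [AVS closedA]; split.
  by apply/subsetP=> y; rewrite !inE negb_or => /andP[/andP[_ ->] ->].
move=> f fH fS y z yf zf; rewrite !inE !negb_or => /andP[/andP[yA _] _].
rewrite (disjointFr fS zf) andbT; apply/andP; split.
  by apply: contra yA; apply: closedA fS z y zf yf.
by case: (wfH f fH) => /subsetP/(_ z zf).
Qed.

Lemma closed_adj_induced H S A e G Y :
  comp_union H S A -> e \subset A :|: S -> hE G \subset e |: hE H ->
  [disjoint Y & S] -> closed (adj (induced G Y)) A.
Proof.
move=> [_ closedA] eAS EG YS y z /existsP[f /andP[]].
rewrite inE => /andP[fG fY] /andP[yf zf].
have fS : [disjoint f & S] by exact: disjointWl fY YS.
case/setU1P: (subsetP EG f fG) => [fe | fH].
  have fA : f \subset A.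
    apply/subsetP=> w wf; move/subsetP: eAS => /(_ w); rewrite -fe in_setU.
    by rewrite (disjointFr fS wf) orbF; apply.
  by rewrite (subsetP fA y yf) (subsetP fA z zf).
by apply/idP/idP; [apply: closedA fS y z yf zf | apply: closedA fS z y zf yf].
Qed.

Lemma subhg_add_edge_within H S A e G :
  comp_union H S A -> e \subset A :|: S -> ~~ (e \subset S) ->
  subhgb G (add_edge H e) -> e \in hE G -> #|S| < kappa G ->
  hV G \subset A :|: S.
Proof.
move=> AS eAS eS /and3P[_ EG /forallP wfG] eG lt_S.
have [u ue uS] := subsetPn eS.
have uA : u \in A by move/subsetP: eAS => /(_ u ue); rewrite inE (negbTE uS) orbF.
have uG : u \in hV G by case/andP: (implyP (wfG e) eG) => /subsetP/(_ u ue).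
apply/subsetP=> v vG; rewrite inE; apply/negPn/negP; rewrite negb_or => /andP[vA vS].
suff /kappa_le_vcut le_kX : vcut G (S :&: hV G).
  by move: (leq_trans le_kX (subset_leq_card (subsetIl S (hV G)))); rewrite leqNgt lt_S.
split=> [|connG]; first exact: subsetIr.
have Y_S : [disjoint hV G :\: S :&: hV G & S].
  by rewrite disjoints_subset; apply/subsetP=> w; rewrite !inE; case: (w \in S); rewrite /= ?andNb.
have conn_uv : connect (adj (hdel G (S :&: hV G))) u v.
  by apply: connG; rewrite !inE ?(negbTE uS) ?(negbTE vS) ?uG ?vG.
by move: (closed_connect (closed_adj_induced AS eAS EG Y_S) conn_uv); rewrite uA (negbTE vA).
Qed.

Lemma vertex_k_maximal_induced k r H S A :
  vertex_k_maximal k r H -> #|S| <= k -> k < r -> S \subset hV H ->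
  comp_union H S A -> vertex_k_maximal k r (induced H (A :|: S)).
Proof.
move=> [wfH unifH barH maxH] Sk kr SV AS.
have YV : A :|: S \subset hV H.
  by rewrite subUset SV andbT; case: AS => /subset_trans-> //; apply: subsetDl.
have EY : hE (induced H (A :|: S)) \subset hE H.
  by apply/subsetP=> f; rewrite inE => /andP[].
split.
- by move=> f; rewrite inE => /andP[/wfH[_ ->] ->].
- by move=> f; rewrite inE => /andP[/unifH].
- exact: leq_trans (@kappa_bar_le_sub (induced H (A :|: S)) H YV EY) barH.
move=> e [/= eY er eN].
have eH : e \notin hE H by apply: contra eN => eH; rewrite inE eH eY.
have [G subG lt_k] := kappa_bar_gt_witness (maxH e (And3 (subset_trans eY YV) er eH)).
have eG : e \in hE G.
  apply/negPn/negP=> eG; move: lt_k; rewrite ltnNge => /negP[].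
  apply: leq_trans barH; apply: kappa_le_kappa_bar_sub.
  case/and3P: (subG) => VGH EG _; apply: (subhgbW subG); first exact: VGH.
  apply/subsetP=> f fG.
  by case/setU1P: (subsetP EG f fG) => // fe; rewrite -fe fG in eG.
have eS : ~~ (e \subset S).
  by apply: contraL kr => /subset_leq_card; rewrite er -leqNgt => /leq_trans; apply.
have VG := subhg_add_edge_within AS eY eS subG eG (leq_ltn_trans Sk lt_k).
apply: leq_trans lt_k _; apply: kappa_le_kappa_bar_sub.
apply: (subhgbW subG); first exact: VG.
case/and3P: subG => _ EG /forallP wfG; apply/subsetP=> f fG.
case/setU1P: (subsetP EG f fG) => [-> | fH]; first exact: setU11.
case/andP: (implyP (wfG f) fG) => fV _.
by rewrite !inE fH (subset_trans fV VG) orbT.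
Qed.

End VertexMaximal.

Theorem mainTheorem8 (T : finType) (n k r : nat) (H : hypergraph T)
  (S : {set T}) (x : T) :
  2 <= k -> 2 <= r -> k < r -> k + r <= n ->
  #|hV H| = n ->
  vertex_k_maximal k r H ->
  min_vcut H S ->
  x \in hV (hdel H S) ->
  let VC1 := comp_of (hdel H S) x in
  let VC2 := hV (hdel H (VC1 :|: S)) in
  let H1 := induced H (VC1 :|: S) in
  let H2 := induced H (VC2 :|: S) in
  vertex_k_maximal k r H1 /\ vertex_k_maximal k r H2.
Proof.
move=> _ _ kr _ _ maxH minS _ VC1 VC2 H1 H2.
have [wfH _ barH _] := maxH.
have Sk : #|S| <= k.
  exact: leq_trans (min_vcut_le_kappa minS) (leq_trans (kappa_le_kappa_bar wfH) barH).
have SV : S \subset hV H by case: minS => [[]].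
have VC1_S : comp_union H S VC1 by apply: comp_union_comp_of.
split; apply: vertex_k_maximal_induced maxH Sk kr SV _ => //.
exact: comp_union_compl.
Qed.
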